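(* Let $\mathcal{P}$ be a minimum path cover of a tree $T$ and let $e=xy$ be a connector edge of $\mathcal{P}$. Then at least one of $x,y$ is an interior connector vertex.
   Context: A path cover of a tree $T$ is a set of vertex-disjoint paths of $T$ (a single vertex counts as a path) that together cover all vertices of $T$; it is minimum if no path cover has fewer paths. For a path cover $\mathcal{P}$, an edge $xy$ of $T$ with $x,y$ in different paths of $\mathcal{P}$ is a connector edge, and $x,y$ are connector vertices; a connector vertex is interior if it is an interior (non-end) vertex of the path of $\mathcal{P}$ containing it. *)

From mathcomp Require Import all_boot.
Set Implicit Arguments. Unset Strict Implicit. Unset Printing Implicit Defensive.

Section Defs.
Variables (V : finType) (g : rel V).

Definition simple_graph : Prop := symmetric g /\ irreflexive g.

Definition acyclic : Prop :=
  forall c : seq V, uniq c -> 3 <= size c -> ~~ cycle g c.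

Definition connected : Prop := forall x y : V, connect g x y.

Definition is_tree : Prop := simple_graph /\ connected /\ acyclic.

Definition is_gpath (p : seq V) : bool :=
  if p is x :: q then path g x q && uniq p else false.

Definition is_path_cover (P : seq (seq V)) : Prop :=
  all is_gpath P /\ uniq (flatten P) /\ (forall v : V, v \in flatten P).

Definition is_min_path_cover (P : seq (seq V)) : Prop :=
  is_path_cover P /\ forall P', is_path_cover P' -> size P <= size P'.

Definition same_path (P : seq (seq V)) (x y : V) : bool :=
  has (fun p => (x \in p) && (y \in p)) P.

Definition connector_edge (P : seq (seq V)) (x y : V) : bool :=
  g x y && ~~ same_path P x y.

Definition connector_vertex (P : seq (seq V)) (x : V) : Prop :=
  exists y, connector_edge P x y || connector_edge P y x.

Definition interior_in (P : seq (seq V)) (x : V) : Prop :=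
  exists2 p, p \in P & [&& x \in p, x != head x p & x != last x p].

Definition interior_connector (P : seq (seq V)) (x : V) : Prop :=
  connector_vertex P x /\ interior_in P x.

End Defs.

(* If neither x nor y were interior, each would be an end of its path. Orient
   the path of x to end at x and the path of y to start at y: their
   concatenation through the edge xy is again a path, which yields a path
   cover with one path fewer. *)
From mathcomp Require Import all_boot.

Set Implicit Arguments. Unset Strict Implicit. Unset Printing Implicit Defensive.

Section PathCovers.
Variables (V : finType) (g : rel V).

Definition endpoint (p : seq V) (x : V) : bool :=
  (x == head x p) || (x == last x p).

Lemma gpath_cat p q x y : is_gpath g p -> is_gpath g q ->
  last x p = x -> head y q = y -> g x y -> uniq (p ++ q) ->
  is_gpath g (p ++ q).
Proof.
case: p => // a s; case: q => // b t /= /andP[gs _] /andP[gt _] <- <- gxy.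
by move=> ->; rewrite andbT cat_path gs /= gxy gt.
Qed.

Lemma interior_inP (P : seq (seq V)) x :
  reflect (interior_in P x)
          (has (fun p => [&& x \in p, x != head x p & x != last x p]) P).
Proof. exact: (iffP hasP) => -[p pP xp]; exists p. Qed.

Lemma not_interior_endpoint (P : seq (seq V)) p x :
  ~ interior_in P x -> p \in P -> x \in p -> endpoint p x.
Proof.
move=> xNint pP xp; apply/negPn/negP; rewrite negb_or => /andP[xNh xNl].
by apply: xNint; exists p; rewrite ?xp ?xNh ?xNl.
Qed.

Lemma path_cover_perm (P Q : seq (seq V)) :
  perm_eq P Q -> is_path_cover g P -> is_path_cover g Q.
Proof.
move=> PQ [gP [uP covP]]; have PQf := perm_flatten PQ.
split; last split.
- by apply/allP => p; rewrite -(perm_mem PQ) => /(allP gP).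
- by rewrite -(perm_uniq PQf).
- by move=> v; rewrite -(perm_mem PQf).
Qed.

Lemma path_cover_reorient p q p' q' (R : seq (seq V)) :
  perm_eq p' p -> perm_eq q' q -> is_gpath g p' -> is_gpath g q' ->
  is_path_cover g [:: p, q & R] -> is_path_cover g [:: p', q' & R].
Proof.
move=> pp' qq' gp' gq' [/and3P[_ _ gR] [uP covP]].
have Pf : perm_eq (p ++ q ++ flatten R) (p' ++ q' ++ flatten R).
  by rewrite perm_sym (perm_cat pp') // (perm_cat qq').
split; last split.
- by rewrite /= gp' gq'.
- by rewrite /= -(perm_uniq Pf).
- by move=> v; rewrite /= -(perm_mem Pf).
Qed.

Lemma path_cover_merge p q (R : seq (seq V)) :
  is_gpath g (p ++ q) ->
  is_path_cover g [:: p, q & R] -> is_path_cover g ((p ++ q) :: R).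
Proof.
move=> gpq [/and3P[_ _ gR] [uP covP]].
by split; last split; rewrite /= ?gpq ?gR -?catA.
Qed.

Hypothesis gsym : symmetric g.

Lemma gpath_rev p : is_gpath g (rev p) = is_gpath g p.
Proof.
have gpathE q : is_gpath g q = [&& ~~ nilp q, sorted g q & uniq q] by case: q.
rewrite !gpathE rev_nilp rev_uniq rev_sorted.
by case: p => //= a s; rewrite (@eq_path _ _ g).
Qed.

Lemma gpath_orient_last p x : is_gpath g p -> endpoint p x ->
  exists2 p', perm_eq p' p & is_gpath g p' /\ last x p' = x.
Proof.
move=> gp /orP[/eqP xh | /eqP xl]; last by exists p.
exists (rev p); first by rewrite perm_rev.
by rewrite gpath_rev; split=> //; case: p xh {gp} => //= a s ->;
  rewrite rev_cons last_rcons.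
Qed.

Lemma gpath_orient_head p x : is_gpath g p -> endpoint p x ->
  exists2 p', perm_eq p' p & is_gpath g p' /\ head x p' = x.
Proof.
move=> gp /(gpath_orient_last gp)[p' pp' [gp' xl]].
exists (rev p'); first by rewrite perm_rev.
split; first by rewrite gpath_rev.
by case/lastP: p' {pp' gp'} xl => //= s a; rewrite last_rcons rev_rcons.
Qed.

Lemma min_path_cover_endpoints_nonadjacent P p q x y :
  is_min_path_cover g P -> p \in P -> q \in P -> p != q ->
  endpoint p x -> endpoint q y -> ~~ g x y.
Proof.
move=> [coverP minP] pP qP pq xp yq; apply/negP => gxy.
have qPp : q \in rem p P.
  by move: (perm_mem (perm_to_rem pP) q); rewrite qP inE eq_sym (negbTE pq).
set R := rem q (rem p P).
have PpqR : perm_eq P [:: p, q & R].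
  by apply: perm_trans (perm_to_rem pP) _; rewrite perm_cons perm_to_rem.
have coverpqR := path_cover_perm PpqR coverP.
have [gp gq] : is_gpath g p /\ is_gpath g q.
  by case: coverP => /allP gP _; split; apply: gP.
have [p' pp' [gp' xl]] := gpath_orient_last gp xp.
have [q' qq' [gq' yh]] := gpath_orient_head gq yq.
have cover' := path_cover_reorient pp' qq' gp' gq' coverpqR.
have gp'q' : is_gpath g (p' ++ q').
  apply: gpath_cat gp' gq' xl yh gxy _.
  by case: cover' => _ [/= + _]; rewrite catA cat_uniq => /andP[].
have := minP _ (path_cover_merge gp'q' cover').
by rewrite (perm_size PpqR) ltnn.
Qed.

End PathCovers.

Theorem lemma3p5 (V : finType) (g : rel V) (P : seq (seq V)) (x y : V) :
  is_tree g -> is_min_path_cover g P -> connector_edge g P x y ->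
  interior_connector g P x \/ interior_connector g P y.
Proof.
move=> [[gsym _] _] minP cxy.
have cx : connector_vertex g P x by exists y; rewrite cxy.
have cy : connector_vertex g P y by exists x; rewrite cxy orbT.
case: (interior_inP P x) => [xint | xNint]; first by left.
case: (interior_inP P y) => [yint | yNint]; first by right.
have covP : forall v, v \in flatten P by case: minP => -[_ []].
have [p pP xp] := flattenP (covP x).
have [q qP yq] := flattenP (covP y).
case/andP: cxy => gxy Nsame.
have pq : p != q.
  by apply: contraNneq Nsame => epq; apply/hasP; exists p; rewrite // xp epq.
have := min_path_cover_endpoints_nonadjacent gsym minP pP qP pq
  (not_interior_endpoint xNint pP xp) (not_interior_endpoint yNint qP yq).
by rewrite gxy.
Qed.
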